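(* Let $X,Y\in\mathbb R^{d\times k}$ with $X^\top X=Y^\top Y=I_k$, and let $\theta\in\mathbb R^k$ be the vector of principal angles between their column spans. If $\|\theta\|_\infty\le\frac\pi4$, then $$\frac\pi2\|R_X^{-1}(Y)\|_F\ \ge\ \frac\pi2 d_F(X,Y)\ \ge\ d_A(X,Y)\ \ge\ \frac1{\sqrt2}\|R_X^{-1}(Y)\|_F.$$
   Context: Principal angles: if $X^\top Y=U\cos(\Theta)V^\top$ is a singular value decomposition with $\Theta=\mathrm{diag}(\theta_1,\dots,\theta_k)$, $\theta_i\in[0,\pi/2]$, then $\theta=(\theta_1,\dots,\theta_k)$. The arc-length distance is $d_A(X,Y)=\|\theta\|_2$ and the projection Frobenius distance is $d_F(X,Y)=\|\sin\theta\|_2=2^{-1/2}\|XX^\top-YY^\top\|_F$. For $X^\top Y$ invertible, $R_X^{-1}(Y)=(I-XX^\top)Y(X^\top Y)^{-1}$, the inverse of the retraction $R_X(V)=(X+V)[(X+V)^\top(X+V)]^{-1/2}$ on the Grassmann manifold. *)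

From mathcomp Require Import all_boot all_order all_algebra.
From mathcomp Require Import all_classical all_reals all_analysis.
Set Implicit Arguments. Unset Strict Implicit. Unset Printing Implicit Defensive.
Import Order.TTheory GRing.Theory Num.Theory.
Local Open Scope ring_scope.

Section Defs.
Variable R : realType.

Definition frob_norm (m n : nat) (A : 'M[R]_(m, n)) : R :=
  Num.sqrt (\sum_(i < m) \sum_(j < n) A i j ^+ 2).

Definition principal_angles (d k : nat) (X Y : 'M[R]_(d, k)) (theta : 'rV[R]_k) : Prop :=
  (forall i, 0 <= theta 0 i <= pi / 2) /\
  exists U V : 'M[R]_k,
    U^T *m U = 1%:M /\ V^T *m V = 1%:M /\
    X^T *m Y = U *m diag_mx (map_mx cos theta) *m V^T.

(* arc-length distance d_A = ||theta||_2 *)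
Definition dist_arc (k : nat) (theta : 'rV[R]_k) : R :=
  Num.sqrt (\sum_(i < k) theta 0 i ^+ 2).

(* projection Frobenius distance d_F = ||sin theta||_2 *)
Definition dist_projF (k : nat) (theta : 'rV[R]_k) : R :=
  Num.sqrt (\sum_(i < k) sin (theta 0 i) ^+ 2).

Definition inv_retr (d k : nat) (X Y : 'M[R]_(d, k)) : 'M[R]_(d, k) :=
  (1%:M - X *m X^T) *m Y *m invmx (X^T *m Y).

End Defs.

From mathcomp Require Import all_boot all_order all_algebra.
From mathcomp Require Import all_classical all_reals all_analysis.
From mathcomp Require Import ring lra.
Import Order.TTheory GRing.Theory Num.Theory.
Import numFieldNormedType.Exports.
Local Open Scope ring_scope.

(* Write A := X^T Y = U cos(Theta) V^T, which is invertible since every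
   theta_i <= pi/4, and P := I - X X^T, the orthogonal projector onto the
   complement of span X.  Then Z := R_X^{-1}(Y) = P Y A^{-1} satisfies
   Z^T Z = A^{-T} (I - A^T A) A^{-1} = A^{-T} A^{-1} - I, so that
   ||Z||_F^2 = sum_i (cos^-2 theta_i - 1) = sum_i tan^2 theta_i.
   The three inequalities then hold termwise: sin^2 <= tan^2 because
   cos^2 <= 1, while theta cos theta <= sin theta <= theta together with
   cos^2 theta >= 1/2 on [0, pi/4] give theta <= (pi/2) sin theta and
   tan^2 theta <= 2 theta^2. *)

Section Trigonometry.
Variable R : realType.
Implicit Types x : R.

Lemma sin_le_id x : 0 <= x -> sin x <= x.
Proof.
move=> x0; have [|c _] := @MVT_segment _ sin cos _ _ x0.
  exact/continuous_subspaceT/continuous_sin.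
by rewrite sin0 !subr0 => ->; rewrite -[leRHS]mul1r ler_wpM2r // cos_le1.
Qed.

Lemma ler_cos : {in `[0, pi] &, {mono @cos R : x y /~ y <= x}}.
Proof. by move=> x y xpi ypi; rewrite !leNgt ltr_cos. Qed.

Lemma mulr_cos_le_sin x : 0 <= x <= pi -> x * cos x <= sin x.
Proof.
move=> /andP[x0 xpi]; have [|c] := @MVT_segment _ sin cos _ _ x0.
  exact/continuous_subspaceT/continuous_sin.
rewrite in_itv /= sin0 !subr0 => /andP[c0 cx] ->.
rewrite mulrC ler_wpM2r // ler_cos // in_itv /= ?c0 ?x0 ?xpi //.
exact: le_trans cx xpi.
Qed.

Lemma sin_piquarter : sin (pi / 4) = cos (pi / 4) :> R.
Proof. by have := tan_piquarter R; rewrite /tan => /divr1_eq. Qed.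

Lemma cos_piquarter_sqr : cos (pi / 4) ^+ 2 = 2^-1 :> R.
Proof. by have := cos2Dsin2 (pi / 4 : R); rewrite sin_piquarter; lra. Qed.

Lemma cos_piquarter_le : cos (pi / 4) <= pi / 4 :> R.
Proof. by rewrite -sin_piquarter sin_le_id // divr_ge0 ?pi_ge0. Qed.

Lemma sin_sqr_le_tan_sqr x : cos x != 0 -> sin x ^+ 2 <= tan x ^+ 2.
Proof.
move=> c0; have c2 : 0 < cos x ^+ 2 by rewrite exprn_even_gt0.
rewrite /tan exprMn exprVn ler_pdivlMr //.
by have := cos2Dsin2 x; nra.
Qed.

Section FirstQuarter.
Variable t : R.
Hypothesis t_quarter : 0 <= t <= pi / 4.

Lemma cos_gt0_quarter : 0 < cos t.
Proof.
have /andP[t0 t4] := t_quarter; have pi0 := @pi_gt0 R.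
by apply: cos_gt0_pihalf; apply/andP; split; lra.
Qed.

Lemma cos_piquarter_le_cos : cos (pi / 4) <= cos t.
Proof.
have /andP[t0 t4] := t_quarter; have pi0 := @pi_gt0 R.
by rewrite ler_cos // in_itv /=; apply/andP; split; lra.
Qed.

Lemma le_pihalf_sin : t <= pi / 2 * sin t.
Proof.
have /andP[t0 t4] := t_quarter; have pi0 := @pi_gt0 R.
have tc : t * cos (pi / 4) <= sin t.
  have tpi : 0 <= t <= pi by apply/andP; split; lra.
  by rewrite (le_trans _ (mulr_cos_le_sin _ tpi)) // ler_wpM2l // cos_piquarter_le_cos.
set c := cos (pi / 4) in tc *.
have c0 : 0 <= c by rewrite /c -sin_piquarter sin_ge0_pi //; lra.
have tc_eq : 2 * c * (t * c) = t.
  rewrite (_ : 2 * c * (t * c) = 2 * c ^+ 2 * t); last by ring.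
  by rewrite cos_piquarter_sqr mulfV ?mul1r.
have pihalf_ge : 2 * c <= pi / 2 by have := cos_piquarter_le; rewrite -/c; lra.
have : 2 * c * (t * c) <= pi / 2 * (t * c) by rewrite ler_wpM2r ?mulr_ge0.
have : pi / 2 * (t * c) <= pi / 2 * sin t by rewrite ler_wpM2l //; lra.
lra.
Qed.

Lemma tan_sqr_le : tan t ^+ 2 <= 2 * t ^+ 2.
Proof.
have /andP[t0 t4] := t_quarter; have pi0 := @pi_gt0 R.
have c0 := cos_gt0_quarter.
have c2 : 2^-1 <= cos t ^+ 2.
  by rewrite -cos_piquarter_sqr lerXn2r ?nnegrE ?cos_piquarter_le_cos //;
    [rewrite -sin_piquarter sin_ge0_pi //; lra | exact: ltW].
have s0 : 0 <= sin t by apply: sin_ge0_pi; lra.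
have st : sin t <= t by apply: sin_le_id; lra.
rewrite /tan exprMn exprVn ler_pdivrMr ?exprn_gt0 //.
nra.
Qed.

End FirstQuarter.
End Trigonometry.

Section Frobenius.
Context {R : realType}.

Lemma frob_normE m n (A : 'M[R]_(m, n)) :
  frob_norm A = Num.sqrt (\tr (A^T *m A)).
Proof.
rewrite /frob_norm /mxtrace exchange_big; congr Num.sqrt.
apply: eq_bigr => j _; rewrite !mxE.
by apply: eq_bigr => i _; rewrite !mxE expr2.
Qed.

Lemma mxtrace_gram_svd n (U V : 'M[R]_n) (c : 'rV[R]_n) :
  U^T *m U = 1%:M -> V^T *m V = 1%:M ->
  \tr ((U *m diag_mx c *m V^T)^T *m (U *m diag_mx c *m V^T)) =
  \sum_i c 0 i ^+ 2.
Proof.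
move=> hU hV; rewrite !trmx_mul trmxK tr_diag_mx !mulmxA.
rewrite -[V *m diag_mx c *m U^T *m U]mulmxA hU mulmx1.
rewrite mxtrace_mulC !mulmxA hV mul1mx.
by apply: eq_bigr => i _; rewrite mul_diag_mx !mxE eqxx mulr1n expr2.
Qed.

Lemma mulmx_svd_inv {n} {U V : 'M[R]_n} {c : 'rV[R]_n} :
  U^T *m U = 1%:M -> V^T *m V = 1%:M -> (forall i, c 0 i != 0) ->
  (U *m diag_mx c *m V^T) *m (V *m diag_mx (map_mx GRing.inv c) *m U^T)
  = 1%:M.
Proof.
move=> hU hV c0.
have cc : diag_mx c *m diag_mx (map_mx GRing.inv c) = 1%:M.
  apply/matrixP => i j; rewrite mul_diag_mx !mxE.
  by case: eqVneq => [->|_]; rewrite ?mulr1n ?mulfV ?mulr0n ?mulr0.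
rewrite !mulmxA -[U *m _ *m V^T *m V]mulmxA hV mulmx1.
by rewrite -[U *m _ *m diag_mx _]mulmxA cc mulmx1 mulmx1C.
Qed.

Lemma gram_compl_proj d k (X : 'M[R]_(d, k)) :
  X^T *m X = 1%:M ->
  (1%:M - X *m X^T)^T *m (1%:M - X *m X^T) = 1%:M - X *m X^T.
Proof.
move=> hX; rewrite [(_ - _)^T]linearB /= trmx1 trmx_mul trmxK mulmxBl mul1mx.
by rewrite mulmxBr mulmx1 mulmxA -[X *m X^T *m X]mulmxA hX mulmx1 subrr subr0.
Qed.

Lemma gram_inv_retr d k (X Y : 'M[R]_(d, k)) :
  X^T *m X = 1%:M -> Y^T *m Y = 1%:M -> X^T *m Y \in unitmx ->
  (inv_retr X Y)^T *m inv_retr X Y =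
  (invmx (X^T *m Y))^T *m invmx (X^T *m Y) - 1%:M.
Proof.
move=> hX hY hA; set A := X^T *m Y; set B := invmx A.
have YPY : Y^T *m (1%:M - X *m X^T) *m Y = 1%:M - A^T *m A.
  by rewrite mulmxBr mulmx1 mulmxBl hY /A trmx_mul trmxK !mulmxA.
have -> : (inv_retr X Y)^T *m inv_retr X Y =
    B^T *m (Y^T *m ((1%:M - X *m X^T)^T *m (1%:M - X *m X^T)) *m Y) *m B.
  by rewrite /inv_retr !trmx_mul !mulmxA.
rewrite gram_compl_proj // YPY mulmxBr mulmx1 mulmxBl.
by rewrite mulmxA -trmx_mul -[(A *m B)^T *m _ *m _]mulmxA (mulmxV hA) trmx1 mul1mx.
Qed.

Lemma frob_norm_inv_retr {d k} {X Y : 'M[R]_(d, k)} {theta : 'rV[R]_k} :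
  X^T *m X = 1%:M -> Y^T *m Y = 1%:M -> principal_angles X Y theta ->
  (forall i, cos (theta 0 i) != 0) ->
  frob_norm (inv_retr X Y) = Num.sqrt (\sum_i tan (theta 0 i) ^+ 2).
Proof.
move=> hX hY [_ [U [V [hU [hV hA]]]]] c0.
have c0' i : map_mx cos theta 0 i != 0 by rewrite mxE.
have AB := mulmx_svd_inv hU hV c0'; rewrite -hA in AB.
have Au : X^T *m Y \in unitmx := (mulmx1_unit AB).1.
rewrite frob_normE gram_inv_retr //.
have -> : invmx (X^T *m Y) = V *m diag_mx (map_mx GRing.inv (map_mx cos theta)) *m U^T.
  by rewrite -[RHS](mulKmx Au) AB mulmx1.
rewrite linearB /= mxtrace1 mxtrace_gram_svd //.
rewrite -[k in _ - k%:R]card_ord -sumr_const -sumrB; congr Num.sqrt.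
by apply: eq_bigr => i _; rewrite !mxE exprVn cos2_tan2 // addrC addKr.
Qed.

End Frobenius.

Lemma ler_sqrt_sum (R : realType) k (f g : 'I_k -> R) (c : R) :
  0 <= c -> (forall i, 0 <= f i) -> (forall i, f i <= c ^+ 2 * g i) ->
  Num.sqrt (\sum_i f i) <= c * Num.sqrt (\sum_i g i).
Proof.
move=> c0 f0 fg; rewrite -[c in c * _]ger0_norm // -sqrtr_sqr -sqrtrM ?sqr_ge0 //.
rewrite ler_sqrt ?mulr_sumr ?ler_sum //.
by apply: le_trans (ler_sum _ (fun i _ => fg i)); exact: sumr_ge0.
Qed.

Theorem lemma9 (R : realType) (d k : nat) (X Y : 'M[R]_(d, k)) (theta : 'rV[R]_k) :
  X^T *m X = 1%:M -> Y^T *m Y = 1%:M ->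
  principal_angles X Y theta ->
  (forall i, `|theta 0 i| <= pi / 4) ->
  [/\ pi / 2 * frob_norm (inv_retr X Y) >= pi / 2 * dist_projF theta,
      pi / 2 * dist_projF theta >= dist_arc theta
    & dist_arc theta >= frob_norm (inv_retr X Y) / Num.sqrt 2].
Proof.
move=> hX hY angles small.
have quarter i : 0 <= theta 0 i <= pi / 4.
  by have /andP[t0 _] := angles.1 i; rewrite t0 -(ger0_norm t0) small.
have c0 i : cos (theta 0 i) != 0 by exact/lt0r_neq0/cos_gt0_quarter.
have pi2 : 0 <= pi / 2 :> R by rewrite divr_ge0 ?pi_ge0.
rewrite /dist_projF /dist_arc (frob_norm_inv_retr hX hY angles c0).
split.
- rewrite ler_wpM2l // -[leRHS]mul1r.
  by apply: ler_sqrt_sum => // i; rewrite ?sqr_ge0 // expr1n mul1r sin_sqr_le_tan_sqr.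
- apply: ler_sqrt_sum => // i; first exact: sqr_ge0.
  have /andP[t0 _] := quarter i.
  by rewrite -exprMn lerXn2r ?nnegrE ?le_pihalf_sin // (le_trans t0) ?le_pihalf_sin.
- rewrite ler_pdivrMr ?sqrtr_gt0 ?ltr0n // mulrC.
  apply: ler_sqrt_sum => // i; first exact: sqr_ge0.
  by rewrite sqr_sqrtr ?ler0n // tan_sqr_le.
Qed.
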